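(* Let $(\mathcal{U},f,g,\preccurlyeq)$ be a fault-tolerance partially ordered $(m,n)$-semiring as described in the context, let $k,t$ be positive integers with $k<m$, $t<n$, and let $x_1,\ldots,x_m,y_1,\ldots,y_m,z_1,\ldots,z_n,u_1,\ldots,u_n\in\mathcal{U}$ be disjoint components. (i) If $f(\underbrace{\mathbf{0},\ldots,\mathbf{0}}_{m-k},\underbrace{f(x_1^m),\ldots,f(x_1^m)}_{k})\preccurlyeq f(y_1^m)$, then $f(x_1^m)\preccurlyeq f(y_1^m)$. (ii) If $g(z_1^n)\preccurlyeq g(\underbrace{\mathbf{1},\ldots,\mathbf{1}}_{n-t},\underbrace{g(u_1^n),\ldots,g(u_1^n)}_{t})$, then $g(z_1^n)\preccurlyeq g(u_1^n)$.
   Context: Notation: $x_i^j$ denotes $x_i,\ldots,x_j$. $(\mathcal{U},f,g)$ is an $(m,n)$-semiring: $f$ is an associative $m$-ary and $g$ an associative $n$-ary operation on $\mathcal{U}$ (associativity of a $k$-ary $h$: $h(x_1^{i-1},h(x_i^{k+i-1}),x_{k+i}^{2k-1})=h(x_1^{j-1},h(x_j^{k+j-1}),x_{k+j}^{2k-1})$ for $1\le i\le j\le k$), and $g$ distributes over $f$ in every position. $\mathcal{U}$ is interpreted as a set of systems; $f(x_1^m)$ is the system that fails when any $x_i$ fails, $g(y_1^n)$ the system that fails only when all $y_j$ fail; elements are assumed to be disjoint components (failing independently), which imposes no further algebraic condition. $\mathbf{0}\in\mathcal{U}$ (the always-up system) is an $f$-identity ($f(\mathbf{0},\ldots,x,\ldots,\mathbf{0})=x$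 in every position) and $\mathbf{1}$ (the always-down system) is a $g$-identity; moreover $g(y_1^{j-1},\mathbf{0},y_{j+1}^n)=\mathbf{0}$ and $f(x_1^{i-1},\mathbf{1},x_{i+1}^m)=\mathbf{1}$ for all arguments and positions. $\preccurlyeq$ is a partial order on $\mathcal{U}$ (''fault-tolerance partial order'') such that $(\mathcal{U},f,g,\preccurlyeq)$ is a partially ordered $(m,n)$-semiring: $a\preccurlyeq b$ implies $f(x_1^{i-1},a,x_{i+1}^m)\preccurlyeq f(x_1^{i-1},b,x_{i+1}^m)$ and $g(y_1^{j-1},a,y_{j+1}^n)\preccurlyeq g(y_1^{j-1},b,y_{j+1}^n)$ for all arguments and all positions; and $\mathbf{0}\preccurlyeq a\preccurlyeq\mathbf{1}$ for all $a\in\mathcal{U}$. *)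

(* m-ary operations are modelled as functions on
   sequences, only ever applied to / constrained on sequences of length m. *)
From mathcomp Require Import all_boot.
Set Implicit Arguments. Unset Strict Implicit. Unset Printing Implicit Defensive.

Section Defs.
Variable U : Type.

(* h(x_1^{i}, h(x_{i+1}^{i+k}), x_{i+k+1}^{2k-1})  (0-indexed position i) *)
Definition inner_at (k : nat) (h : seq U -> U) (xs : seq U) (i : nat) : seq U :=
  take i xs ++ h (take k (drop i xs)) :: drop (i + k) xs.

Definition nary_assoc (k : nat) (h : seq U -> U) : Prop :=
  forall xs : seq U, size xs = (2 * k - 1)%N ->
  forall i j : nat, (i <= j)%N -> (j < k)%N ->
    h (inner_at k h xs i) = h (inner_at k h xs j).

Definition nary_distr (m n : nat) (f g : seq U -> U) : Prop :=
  forall (a0 : U) (ys : seq U) (xs : seq U) (j : nat),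
    size ys = n -> size xs = m -> (j < n)%N ->
    g (set_nth a0 ys j (f xs)) = f [seq g (set_nth a0 ys j x) | x <- xs].

Definition nary_identity (k : nat) (h : seq U -> U) (e : U) : Prop :=
  forall (x : U) (i : nat), (i < k)%N -> h (set_nth e (nseq k e) i x) = x.

Definition nary_absorbing (k : nat) (h : seq U -> U) (z : U) : Prop :=
  forall (xs : seq U) (i : nat), size xs = k -> (i < k)%N ->
    h (set_nth z xs i z) = z.

Definition partial_order (le : U -> U -> Prop) : Prop :=
  (forall a, le a a) /\ (forall a b, le a b -> le b a -> a = b) /\
  (forall a b c, le a b -> le b c -> le a c).

Definition nary_monotone (k : nat) (h : seq U -> U) (le : U -> U -> Prop) : Prop :=
  forall (xs : seq U) (i : nat) (a b : U), size xs = k -> (i < k)%N ->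
    le a b -> le (h (set_nth a xs i a)) (h (set_nth b xs i b)).

(* (U, f, g, le) is a fault-tolerance partially ordered (m,n)-semiring
   with distinguished elements zero (always-up) and one (always-down) *)
Definition ft_po_semiring (m n : nat) (f g : seq U -> U)
    (le : U -> U -> Prop) (zero one : U) : Prop :=
  nary_assoc m f /\ nary_assoc n g /\ nary_distr m n f g /\
  nary_identity m f zero /\ nary_identity n g one /\
  nary_absorbing n g zero /\ nary_absorbing m f one /\
  partial_order le /\
  nary_monotone m f le /\ nary_monotone n g le /\
  (forall a, le zero a /\ le a one).

End Defs.

(* Since 0 is an f-identity, f(x_1^m) = f(0, ..., 0, f(x_1^m), 0, ..., 0) with f(x_1^m)
   placed where the padded argument list first holds it; as 0 is the least element,
   monotonicity of f in every position bounds this by f(0, ..., 0, f(x_1^m), ..., f(x_1^m)).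
   Part (ii) is the order dual: 1 is a g-identity and the greatest element. *)
From mathcomp Require Import all_boot.
From mathcomp Require Import zify.

Set Implicit Arguments.
Unset Strict Implicit.

Lemma set_nth_mkseq (T : Type) (x0 : T) (F : nat -> T) k j y : (j < k)%N ->
  set_nth x0 (mkseq F k) j y = mkseq (fun i => if i == j then y else F i) k.
Proof.
move=> lt_j_k; apply: (@eq_from_nth _ x0).
  by rewrite size_set_nth !size_mkseq (maxn_idPr lt_j_k).
move=> i; rewrite size_set_nth size_mkseq (maxn_idPr lt_j_k) => lt_i_k.
by rewrite nth_set_nth /= !nth_mkseq.
Qed.

Section PreorderedOperation.
Variables (U : Type) (k : nat) (h : seq U -> U) (le : U -> U -> Prop).
Hypothesis le_refl : forall a, le a a.
Hypothesis le_trans : forall a b c, le a b -> le b c -> le a c.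
Hypothesis h_mono : nary_monotone k h le.

Lemma nary_monotone_pointwise (d : U) (xs ys : seq U) :
  size xs = k -> size ys = k ->
  (forall i, (i < k)%N -> le (nth d xs i) (nth d ys i)) -> le (h xs) (h ys).
Proof.
move=> size_xs size_ys le_xy.
pose mix j := mkseq (fun i => if (i < j)%N then nth d ys i else nth d xs i) k.
have mix0 : mix 0 = xs.
  by rewrite /mix -{2}(mkseq_nth d xs) size_xs; apply: eq_mkseq.
have mixk : mix k = ys.
  rewrite /mix -{2}(mkseq_nth d ys) size_ys; apply: eq_mkseq => i.
  by case: ltnP => // le_k_i; rewrite !nth_default ?size_xs ?size_ys.
suff mix_le j : (j <= k)%N -> le (h xs) (h (mix j)) by rewrite -mixk; apply: mix_le.
elim: j => [|j IHj] lt_j_k; first by rewrite mix0.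
apply: le_trans (IHj (ltnW lt_j_k)) _.
(* [nary_monotone] inserts with the inserted value as [set_nth] default. *)
have -> : mix j = set_nth (nth d xs j) (mix j) j (nth d xs j).
  rewrite set_nth_mkseq //; apply: eq_mkseq => i.
  by case: eqVneq => [->|]; rewrite ?ltnn.
have -> : mix j.+1 = set_nth (nth d ys j) (mix j) j (nth d ys j).
  rewrite set_nth_mkseq //; apply: eq_mkseq => i; rewrite ltnS leq_eqVlt.
  by case: eqVneq => [->|].
apply: h_mono; [by rewrite size_mkseq | by [] | exact: le_xy].
Qed.

Lemma nary_identity_bottom_le_nth (e : U) :
  nary_identity k h e -> (forall a, le e a) ->
  forall (xs : seq U) i, size xs = k -> (i < k)%N -> le (nth e xs i) (h xs).
Proof.
move=> h_id e_bot xs i size_xs lt_i_k.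
rewrite -{1}(h_id (nth e xs i) i lt_i_k).
apply: (@nary_monotone_pointwise e) => //.
  by rewrite size_set_nth size_nseq (maxn_idPr lt_i_k).
move=> j lt_j_k; rewrite nth_set_nth /= nth_nseq lt_j_k.
by case: eqVneq => [->|].
Qed.

End PreorderedOperation.

Lemma nary_monotone_flip (U : Type) k (h : seq U -> U) (le : U -> U -> Prop) :
  nary_monotone k h le -> nary_monotone k h (fun a b => le b a).
Proof. by move=> h_mono xs i a b; exact: h_mono. Qed.

Lemma nth_padded (T : Type) (x0 pad x : T) l k :
  (0 < k)%N -> nth x0 (nseq l pad ++ nseq k x) l = x.
Proof. by move=> k_gt0; rewrite nth_cat size_nseq ltnn subnn nth_nseq k_gt0. Qed.

Theorem corollary4 (U : Type) (m n : nat) (f g : seq U -> U)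
    (le : U -> U -> Prop) (zero one : U)
    (HS : ft_po_semiring m n f g le zero one)
    (k t : nat) (hk0 : (0 < k)%N) (hkm : (k < m)%N)
    (ht0 : (0 < t)%N) (htn : (t < n)%N)
    (xs ys zs us : seq U)
    (hx : size xs = m) (hy : size ys = m) (hz : size zs = n) (hu : size us = n) :
  (le (f (nseq (m - k) zero ++ nseq k (f xs))) (f ys) -> le (f xs) (f ys)) /\
  (le (g zs) (g (nseq (n - t) one ++ nseq t (g us))) -> le (g zs) (g us)).
Proof.
case: HS => _ [_ [_ [f_id [g_id [_ [_ [[le_refl [_ le_trans]]
  [f_mono [g_mono bounds]]]]]]]]].
have le_ge a b c : le b a -> le c b -> le c a.
  by move=> le_ba le_cb; exact: le_trans le_cb le_ba.
split=> [le_pad_y | le_z_pad].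
- apply: (le_trans _ _ _ ^~ le_pad_y).
  rewrite -{1}(nth_padded zero zero (f xs) (m - k) hk0).
  apply: (nary_identity_bottom_le_nth le_refl le_trans f_mono f_id
           (fun a => (bounds a).1)); last by lia.
  by rewrite size_cat !size_nseq; lia.
- apply: (le_trans _ _ _ le_z_pad).
  rewrite -{2}(nth_padded one one (g us) (n - t) ht0).
  apply: (nary_identity_bottom_le_nth le_refl le_ge (nary_monotone_flip g_mono) g_id
           (fun a => (bounds a).2)); last by lia.
  by rewrite size_cat !size_nseq; lia.
Qed.
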